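(* Let $\{A_{1C},\dots,A_{qC}\}$ be a $PComS(n,q,c)$. Then $$\sum_{i=1}^{q}l(A_i)=\frac{nq-c}{2},\qquad \sum_{i=1}^{q}\mathcal{N}_{A_i}(R_1)=\frac{nq-c}{4},$$ and for every $k$ with $2\le k\le n-2$, $$\sum_{i=1}^{q}\mathcal{N}_{A_i}(R_k)=\sum_{i=1}^{q}\ \sum_{\substack{i_1+\cdots+i_r=k\\ 1<r\le k}}(-1)^{r}\,\mathcal{N}_{A_i}(R_{i_1}\cdots R_{i_r}),$$ where the inner sum runs over all compositions $(i_1,\dots,i_r)$ of $k$ with $r\ge2$ parts.
   Context: Sequences $X=(x_0,\dots,x_{n-1})\in\mathbb{Z}_2^n$ have entries in $\{+1,-1\}$ and are regarded as periodic (indices mod $n$). The periodic autocorrelation is $\mathsf{P}_X(k)=\sum_{i=0}^{n-1}x_ix_{i+k}$; it depends only on the cyclic-shift class $X_C$. A $PComS(n,q,c)$ is a list (repetitions allowed) of $q$ cyclic-shift classes $A_{1C},\dots,A_{qC}$ with $A_i\in\mathbb{Z}_2^n$ such that $\sum_{i=1}^q\mathsf{P}_{A_i}(k)=c$ for all $1\le k\le n-1$. A run of $X$ is a maximal block of cyclically consecutive equal entries; $l(X)=\#\{i:x_i\ne x_{i+1\bmod n}\}$ is the number of runs ($0$ for constant $X$). For positive integers $i_1,\dots,i_r$, a run string of type $R_{i_1}\cdots R_{i_r}$ is a sequence of $r$ cyclically consecutive runs of lengths $i_1,\dots,i_r$ in this order, and $\mathcal{N}_X(R_{i_1}\cdots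 R_{i_r})$ is the number of such run strings in $X$ (counted by starting run); these quantities depend only on the class $X_C$. *)

From mathcomp Require Import all_boot all_order all_algebra.
Set Implicit Arguments. Unset Strict Implicit. Unset Printing Implicit Defensive.
Import Order.TTheory GRing.Theory Num.Theory.
Local Open Scope ring_scope.

Definition pm1seq (n : nat) (X : seq int) : bool :=
  (size X == n) && all (fun x => (x == 1) || (x == -1)) X.

Definition xa (X : seq int) (i : nat) : int := nth 0 X (i %% size X).

Definition Pauto (X : seq int) (k : nat) : int :=
  \sum_(0 <= i < size X) xa X i * xa X (i + k).

(* PComS(n,q,c): a list of q sequences (representatives of the cyclic
   shift classes A_{iC}) in {+1,-1}^n whose autocorrelations sum to c
   at every shift 1 <= k <= n-1. *)
Definition PComS (n q : nat) (c : int) (As : seq (seq int)) : Prop :=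
  [/\ size As = q,
      all (pm1seq n) As &
      forall k : nat, (1 <= k <= n - 1)%N -> \sum_(A <- As) Pauto A k = c].

Definition nruns (X : seq int) : nat :=
  count (fun i => xa X i != xa X i.+1) (iota 0 (size X)).

Definition run_starts (X : seq int) : seq nat :=
  [seq i <- iota 0 (size X) | xa X (i + size X - 1) != xa X i].

Definition runlen (X : seq int) (t : nat) : nat :=
  let s := run_starts X in
  let m := size s in
  let t' := (t %% m)%N in
  if (t'.+1 < m)%N then (nth 0 s t'.+1 - nth 0 s t')%N
  else (nth 0 s 0 + size X - nth 0 s t')%N.

(* N_X(R_{i_1} ... R_{i_r}): number of starting runs t such that the r
   cyclically consecutive runs t, t+1, ..., t+r-1 have lengths
   i_1, ..., i_r. *)
Definition Nrs (X : seq int) (w : seq nat) : nat :=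
  count (fun t => all (fun j => runlen X (t + j) == nth 0%N w j) (iota 0 (size w)))
        (iota 0 (size (run_starts X))).

(* Write b_p for the indicator that a run starts at position p.  For a +-1
   sequence 2 b_p x_p = x_p - x_(p-1), hence
     4 sum_p b_p b_(p+k) x_p x_(p+k) = 2 P(k) - P(k+1) - P(k-1).
   Since the sign flips from one run to the next, for a run start p the term
   b_(p+k) x_p x_(p+k) is (-1)^r when the r runs beginning at p have total
   length exactly k, and 0 when no such r exists.  Grouping the run starts
   by the lengths (i_1, ..., i_r) of these r runs turns the left-hand side
   into 4 (sum_(r >= 2) (-1)^r sum N(R_i_1 ... R_i_r) - N(R_k)).  Summed over
   a PComS the right-hand side is 2c - c - c = 0 for 2 <= k <= n - 2, and
   2c - c - nq for k = 1 (P(0) = n, no composition of 1 has two parts);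
   similarly 2 l(X) = sum_i (1 - x_i x_(i+1)) = n - P(1). *)

From mathcomp Require Import all_boot all_order all_algebra.
From mathcomp Require Import zify ring.
Import Order.TTheory GRing.Theory Num.Theory.
Set Implicit Arguments. Unset Strict Implicit. Unset Printing Implicit Defensive.
Local Open Scope ring_scope.

Definition pm1 (x : int) : bool := (x == 1) || (x == -1).

Lemma pm1_mulss x : pm1 x -> x * x = 1.
Proof. by case/orP=> /eqP ->. Qed.

Lemma pm1_neqE x y : pm1 x -> pm1 y -> x != y -> y = - x.
Proof. by case/orP=> /eqP -> /orP [] /eqP ->. Qed.

Lemma pm1_neq_mul x y : pm1 x -> pm1 y -> 2 * ((x != y)%:Z * x) = x - y.
Proof. by case/orP=> /eqP -> /orP [] /eqP ->. Qed.

Lemma pm1_neq_sign x y : pm1 x -> pm1 y -> 2 * (x != y)%:Z = 1 - x * y.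
Proof. by case/orP=> /eqP -> /orP [] /eqP ->. Qed.

Lemma count_intE (T : Type) (a : pred T) (s : seq T) :
  (count a s)%:Z = \sum_(x <- s) (a x)%:Z.
Proof. by elim: s => [|x s IH]; rewrite ?big_nil ?big_cons //= PoszD IH. Qed.

Lemma sum_nat_periodic_shift (V : zmodType) (F : nat -> V) (n a : nat) :
  (forall i, F (i + n)%N = F i) ->
  \sum_(0 <= i < n) F (i + a)%N = \sum_(0 <= i < n) F i.
Proof.
move=> F_per; elim: a => [|a IH]; first by under eq_bigr do rewrite addn0.
rewrite -{}IH; apply: (@addrI _ (F a)).
have F_wrap : F a = F (n + a)%N by rewrite addnC F_per.
rewrite [in RHS]F_wrap [RHS]addrC -(big_nat_recr _ _ (fun i => F (i + a)%N)) //.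
rewrite (big_nat_recl _ _ (fun i => F (i + a)%N)) //.
by under eq_bigr do rewrite addSnnS.
Qed.

Section SortedNat.

Variable s : seq nat.
Hypothesis s_sorted : sorted ltn s.

Lemma nth_ltn_index x i : x \in s -> (i < size s)%N ->
  (nth 0 s i < x)%N = (i < index x s)%N.
Proof.
move=> xs i_lt; rewrite -{1}(nth_index 0 xs).
by apply: (@lt_sorted_ltn_nth _ nat 0 s s_sorted); rewrite inE ?index_mem.
Qed.

Lemma ltn_nth_index x i : x \in s -> (i < size s)%N ->
  (x < nth 0 s i)%N = (index x s < i)%N.
Proof.
move=> xs i_lt; rewrite -{1}(nth_index 0 xs).
by apply: (@lt_sorted_ltn_nth _ nat 0 s s_sorted); rewrite inE ?index_mem.
Qed.

End SortedNat.

Section PeriodicSequence.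

Variable X : seq int.
Hypothesis X_pm1 : all pm1 X.
Hypothesis X_gt0 : (0 < size X)%N.

Lemma xa_mod a b : (a = b %[mod size X])%N -> xa X a = xa X b.
Proof. by rewrite /xa => ->. Qed.

Lemma xa_addn_size i : xa X (i + size X) = xa X i.
Proof. by apply: xa_mod; rewrite modnDr. Qed.

Lemma xa_pm1 i : pm1 (xa X i).
Proof. by apply: (allP X_pm1); rewrite /xa mem_nth // ltn_mod. Qed.

Lemma Pauto_shift a k :
  \sum_(0 <= i < size X) xa X (i + a) * xa X (i + a + k) = Pauto X k.
Proof.
rewrite /Pauto -(@sum_nat_periodic_shift _ (fun i => xa X i * xa X (i + k)) _ a).
  by under eq_bigr do rewrite -addnA.
by move=> i; rewrite xa_addn_size addnAC xa_addn_size.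
Qed.

Lemma Pauto0 : Pauto X 0 = (size X)%:Z.
Proof.
rewrite /Pauto (eq_bigr (fun _ => 1)); last by move=> i _; rewrite addn0 pm1_mulss ?xa_pm1.
by rewrite sumr_const_nat subn0 natz.
Qed.

Lemma nruns_Pauto1 : 2 * (nruns X)%:Z = (size X)%:Z - Pauto X 1.
Proof.
rewrite /nruns count_intE mulr_sumr /Pauto.
under eq_bigr do rewrite pm1_neq_sign ?xa_pm1 // -addn1.
by rewrite sumrB /index_iota subn0 big_const_seq count_predT size_iota iter_addr_0 natz.
Qed.

Definition run_start (i : nat) : bool := xa X (i + size X - 1) != xa X i.

Lemma run_start_mod a b : (a = b %[mod size X])%N -> run_start a = run_start b.
Proof.
move=> eq_ab; rewrite /run_start (xa_mod eq_ab); congr (_ != _); apply: xa_mod.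
by rewrite -!addnBA // -modnDml eq_ab modnDml.
Qed.

(* For a run start p this is (-1)^r if p + k starts the r-th run after the one
   at p, and 0 if no run starts at p + k: signs alternate from run to run. *)
Definition run_sign (p k : nat) : int :=
  (run_start (p + k))%:Z * (xa X p * xa X (p + k)).

(* [2 * run_start p * x_p = x_p - x_(p-1)], so the left-hand side is the
   autocorrelation of the difference sequence. *)
Lemma sum_run_start_pairs k : (0 < k)%N ->
  4 * \sum_(0 <= p < size X) (run_start p)%:Z * run_sign p k =
  2 * Pauto X k - Pauto X k.+1 - Pauto X k.-1.
Proof.
move=> k_gt0; rewrite mulr_sumr.
have diff p : 2 * ((run_start p)%:Z * xa X p) = xa X p - xa X (p + size X - 1).
  by rewrite /run_start eq_sym pm1_neq_mul ?xa_pm1.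
rewrite /run_sign (eq_bigr (fun p => (xa X p - xa X (p + size X - 1)) *
                           (xa X (p + k) - xa X (p + k + size X - 1)))); last first.
  by move=> p _; rewrite -!diff; ring.
under eq_bigr do rewrite mulrBl !mulrBr.
rewrite !sumrB -/(Pauto X k).
have -> : \sum_(0 <= i < size X) xa X i * xa X (i + k + size X - 1) = Pauto X k.-1.
  apply: eq_bigr => i _; rewrite -(xa_addn_size (i + k.-1)).
  by congr (_ * xa X _); lia.
have -> : \sum_(0 <= i < size X) xa X (i + size X - 1) * xa X (i + k) = Pauto X k.+1.
  rewrite -(Pauto_shift (size X).-1); apply: eq_bigr => i _.
  by rewrite -(xa_addn_size (i + k)); congr (xa X _ * xa X _); lia.
have -> : \sum_(0 <= i < size X) xa X (i + size X - 1) * xa X (i + k + size X - 1) = Pauto X k.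
  rewrite -(Pauto_shift (size X).-1); apply: eq_bigr => i _.
  by congr (xa X _ * xa X _); lia.
ring.
Qed.

Lemma mem_run_starts q : (q \in run_starts X) = (q < size X)%N && run_start q.
Proof. by rewrite mem_filter mem_iota andbC. Qed.

Lemma run_starts_sorted : sorted ltn (run_starts X).
Proof. exact: sorted_filter ltn_trans _ _ (iota_ltn_sorted 0 _). Qed.

End PeriodicSequence.

Section Runs.

Local Open Scope nat_scope.

Variable X : seq int.
Hypothesis X_pm1 : all pm1 X.
Hypothesis X_gt0 : 0 < size X.

Local Notation m := (size (run_starts X)).
Local Notation st t := (nth 0 (run_starts X) t).

Definition run_stop t := if t.+1 < m then st t.+1 else st 0 + size X.

Lemma run_start_nth t : t < m -> (st t < size X) && run_start X (st t).
Proof. by move=> t_lt; rewrite -mem_run_starts mem_nth. Qed.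

Lemma runlenE t : t < m -> runlen X t = run_stop t - st t.
Proof. by move=> t_lt; rewrite /runlen modn_small // /run_stop; case: ifP. Qed.

Lemma runlen_mod u : runlen X u = runlen X (u %% m).
Proof. by rewrite /runlen modn_mod. Qed.

Lemma nth_lt_run_stop t : t < m -> st t < run_stop t.
Proof.
move=> t_lt; rewrite /run_stop; case: ifP => [t1_lt | _].
  exact: (sorted_ltn_nth ltn_trans 0 (run_starts_sorted X)).
by case/andP: (run_start_nth t_lt) => st_lt _; apply: ltn_addl.
Qed.

Lemma run_start_between t q : t < m -> st t < q < run_stop t -> ~~ run_start X q.
Proof.
move=> t_lt /andP [lt_q q_lt]; apply/negP => q_start.
move: q_lt; rewrite /run_stop; case: ifP => [t1_lt | t_last] q_lt.
  have st1_lt : st t.+1 < size X by case/andP: (run_start_nth t1_lt).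
  have q_s : q \in run_starts X by rewrite mem_run_starts q_start (ltn_trans q_lt).
  move: lt_q q_lt; rewrite (nth_ltn_index (run_starts_sorted X) q_s t_lt).
  by rewrite (ltn_nth_index (run_starts_sorted X) q_s t1_lt); lia.
have m_gt0 : 0 < m by apply: leq_ltn_trans t_lt.
have [q_lt_n | n_le_q] := ltnP q (size X).
  have q_s : q \in run_starts X by rewrite mem_run_starts q_lt_n q_start.
  move: lt_q; rewrite (nth_ltn_index (run_starts_sorted X) q_s t_lt).
  have idx_lt : index q (run_starts X) < m by rewrite index_mem.
  by move/negbT: t_last; rewrite -leqNgt; lia.
have q'_start : run_start X (q - size X).
  rewrite (run_start_mod X_gt0 (_ : _ = q %[mod size X])) //.
  by rewrite -[q in RHS](subnK n_le_q) modnDr.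
have q'_s : q - size X \in run_starts X.
  by rewrite mem_run_starts q'_start; case/andP: (run_start_nth m_gt0); lia.
have : q - size X < st 0 by rewrite ltn_subLR // addnC.
by rewrite (ltn_nth_index (run_starts_sorted X) q'_s m_gt0).
Qed.

Lemma run_stop_mod t : t < m -> run_stop t = st (t.+1 %% m) %[mod size X].
Proof.
move=> t_lt; rewrite /run_stop; case: ifP => [t1_lt | t_last].
  by rewrite (modn_small t1_lt).
have -> : t.+1 = m by move/negbT: t_last; rewrite -leqNgt; lia.
by rewrite modnn modnDr.
Qed.

Lemma runlen_gt0 u : 0 < m -> 0 < runlen X u.
Proof.
move=> m_gt0; rewrite runlen_mod runlenE ?ltn_pmod // subn_gt0.
by rewrite nth_lt_run_stop ?ltn_pmod.
Qed.

Lemma run_start_inside t d : t < m -> 0 < d < runlen X t -> ~~ run_start X (st t + d).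
Proof.
move=> t_lt d_in; apply: (run_start_between t_lt).
by move: d_in; rewrite runlenE //; lia.
Qed.

Lemma runlen_stop_mod t : t < m -> st t + runlen X t = st (t.+1 %% m) %[mod size X].
Proof. by move=> t_lt; rewrite runlenE // subnKC ?run_stop_mod // ltnW ?nth_lt_run_stop. Qed.

Lemma xa_run t d : t < m -> d < runlen X t -> xa X (st t + d) = xa X (st t).
Proof.
move=> t_lt; elim: d => [|d IH] d_lt; first by rewrite addn0.
have := run_start_inside t_lt (_ : 0 < d.+1 < runlen X t); rewrite d_lt => /(_ isT).
rewrite /run_start negbK => /eqP <-; rewrite -IH ?(ltnW d_lt) //.
by apply: xa_mod; rewrite -(modnDr (st t + d)); congr (_ %% _); lia.
Qed.

Lemma xa_run_stop t : t < m -> xa X (st t + runlen X t) = - xa X (st t).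
Proof.
move=> t_lt; have m_gt0 : 0 < m by apply: leq_ltn_trans t_lt.
have l_gt0 := runlen_gt0 t m_gt0.
have stop_start : run_start X (st t + runlen X t).
  rewrite (run_start_mod X_gt0 (runlen_stop_mod t_lt)).
  by case/andP: (run_start_nth (ltn_pmod t.+1 m_gt0)).
have l_pred : (runlen X t).-1 < runlen X t by rewrite prednK.
rewrite (pm1_neqE _ _ stop_start) ?xa_pm1 // -(xa_run t_lt l_pred).
by congr (- _); apply: xa_mod; rewrite -(modnDr (st t + _)); congr (_ %% _); lia.
Qed.

Lemma run_sign_inside t k : t < m -> 0 < k < runlen X t -> run_sign X (st t) k = 0%R.
Proof. by move=> t_lt k_in; rewrite /run_sign (negbTE (run_start_inside t_lt k_in)) mul0r. Qed.

Lemma run_sign_stop t : t < m -> run_sign X (st t) (runlen X t) = (-1)%R.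
Proof.
move=> t_lt; have m_gt0 : 0 < m by apply: leq_ltn_trans t_lt.
rewrite /run_sign (run_start_mod X_gt0 (runlen_stop_mod t_lt)).
case/andP: (run_start_nth (ltn_pmod t.+1 m_gt0)) => _ ->.
by rewrite xa_run_stop // mulrN pm1_mulss ?xa_pm1 ?mul1r.
Qed.

Lemma run_sign_next t k : t < m -> runlen X t < k ->
  run_sign X (st t) k = (- run_sign X (st (t.+1 %% m)) (k - runlen X t))%R.
Proof.
move=> t_lt l_lt_k.
have shift : st t + k = st (t.+1 %% m) + (k - runlen X t) %[mod size X].
  by rewrite -[RHS]modnDml -(runlen_stop_mod t_lt) modnDml -addnA subnKC // ltnW.
have next_start : xa X (st (t.+1 %% m)) = (- xa X (st t))%R.
  by rewrite -xa_run_stop // (xa_mod (runlen_stop_mod t_lt)).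
by rewrite /run_sign (run_start_mod X_gt0 shift) (xa_mod shift) next_start; ring.
Qed.

Definition runs_span u r := \sum_(j < r) runlen X (u + j).

Lemma runs_span0 u : runs_span u 0 = 0.
Proof. exact: big_ord0. Qed.

Lemma runs_spanS u r : runs_span u r.+1 = runlen X u + runs_span u.+1 r.
Proof.
rewrite /runs_span big_ord_recl addn0; congr (_ + _).
by apply: eq_bigr => j _; rewrite addSnnS.
Qed.

Lemma runs_span_ge u r : 0 < m -> r <= runs_span u r.
Proof.
move=> m_gt0; rewrite -[leqLHS]card_ord -sum1_card.
by apply: leq_sum => j _; apply: runlen_gt0.
Qed.

Definition signed_hits u k K : int :=
  (\sum_(1 <= r < K) (-1) ^+ r * (runs_span u r == k)%:Z)%R.

Lemma signed_hits_run_sign k K u : 0 < m -> 0 < k < K ->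
  signed_hits u k K = run_sign X (st (u %% m)) k.
Proof.
move=> m_gt0; elim/ltn_ind: k K u => k IH [|K] u /andP [k_gt0 k_le] //.
have t_lt : u %% m < m by exact: ltn_pmod.
rewrite /signed_hits big_nat_recl ?(leq_trans k_gt0) // expr1.
under eq_bigr do rewrite runs_spanS.
rewrite runs_spanS runs_span0 addn0 runlen_mod.
have [k_lt_l | l_lt_k | ->] := ltngtP k (runlen X (u %% m)).
- rewrite run_sign_inside ?k_gt0 // mulr0 add0r big1 // => r _.
  by rewrite gtn_eqF ?mulr0 // ltn_addr.
- have l_gt0 := runlen_gt0 (u %% m) m_gt0.
  rewrite mulr0 add0r run_sign_next //.
  have -> : (u %% m).+1 %% m = u.+1 %% m by rewrite -addn1 modnDml addn1.
  have k'_lt : k - runlen X (u %% m) < k by lia.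
  have k'_in : 0 < k - runlen X (u %% m) < K by apply/andP; split; lia.
  rewrite -(IH _ k'_lt K _ k'_in).
  rewrite /signed_hits -sumrN; apply: eq_bigr => r _.
  rewrite exprS mulN1r mulNr; congr (- (_ * (nat_of_bool _)%:Z)).
  by apply/eqP/eqP; lia.
- rewrite run_sign_stop // mulr1 big_nat_cond big1 ?addr0 // => r /andP [/andP [r_gt0 _] _].
  rewrite -[X in _ == X]addn0 eqn_add2l gtn_eqF ?mulr0 //.
  exact: leq_trans r_gt0 (runs_span_ge _ _ m_gt0).
Qed.

Lemma sum_signed_hits k : 0 < k ->
  (\sum_(0 <= u < m) signed_hits u k k.+1 =
   \sum_(0 <= p < size X) (run_start X p)%:Z * run_sign X p k)%R.
Proof.
move=> k_gt0.
have -> : (\sum_(0 <= p < size X) (run_start X p)%:Z * run_sign X p k =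
           \sum_(p <- run_starts X) run_sign X p k)%R.
  rewrite big_filter [RHS]big_mkcond /index_iota subn0; apply: eq_bigr => p _.
  by rewrite /run_start; case: ifP; rewrite ?mul1r ?mul0r.
rewrite [RHS](big_nth 0); apply: eq_big_nat => u /andP [_ u_lt].
by rewrite signed_hits_run_sign ?modn_small ?k_gt0 ?ltnSn //; apply: leq_ltn_trans u_lt.
Qed.

End Runs.

Section Compositions.

Local Open Scope nat_scope.

Variable X : seq int.

Local Notation m := (size (run_starts X)).

Definition runs_match (w : seq nat) (u : nat) : bool :=
  all (fun j => runlen X (u + j) == nth 0 w j) (iota 0 (size w)).

Lemma Nrs_intE w : (Nrs X w)%:Z = (\sum_(0 <= u < m) (runs_match w u)%:Z)%R.
Proof. by rewrite count_intE /index_iota subn0. Qed.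

Lemma runs_match_tuple K r (t : r.-tuple 'I_K) u :
  runs_match (map (fun i : 'I_K => (i : nat)) t) u =
  [forall j : 'I_r, runlen X (u + j) == tnth t j].
Proof.
rewrite /runs_match size_map size_tuple; apply/allP/forallP => [match_t j | match_t j].
  rewrite (tnth_nth (tnth t j)) -(nth_map _ 0) ?size_tuple //.
  by apply: match_t; rewrite mem_iota /=.
rewrite mem_iota => /andP [_ j_lt]; have := match_t (Ordinal j_lt).
by rewrite (tnth_nth (tnth t (Ordinal j_lt))) -(nth_map _ 0) ?size_tuple.
Qed.

Lemma sum_compositions_match k r u : 0 < m ->
  (\sum_(t : r.-tuple 'I_k.+1 |
          all (fun i : 'I_k.+1 => (0 < i)%N) t && (\sum_(i <- t) (i : nat) == k)%N)
     (runs_match (map (fun i : 'I_k.+1 => (i : nat)) t) u)%:Z =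
   (runs_span X u r == k)%:Z)%R.
Proof.
move=> m_gt0.
have match_span (t : r.-tuple 'I_k.+1) :
    runs_match (map (fun i : 'I_k.+1 => (i : nat)) t) u -> \sum_(i <- t) i = runs_span X u r.
  rewrite runs_match_tuple => /forallP match_t; rewrite big_tuple.
  by apply: eq_bigr => j _; apply/esym/eqP/match_t.
have [span_k | span_nk] := eqVneq (runs_span X u r) k; last first.
  rewrite big1 // => t /andP [_ /eqP sum_t]; case: (boolP (runs_match _ _)) => // /match_span.
  by rewrite sum_t => /esym/eqP; rewrite (negbTE span_nk).
have runlen_lt (j : 'I_r) : runlen X (u + j) < k.+1.
  by rewrite ltnS -span_k /runs_span (bigD1 j) //= leq_addr.
pose t0 := [tuple Ordinal (runlen_lt j) | j < r].
have match_t0 (t : r.-tuple 'I_k.+1) : runs_match (map (fun i : 'I_k.+1 => (i : nat)) t) u = (t == t0).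
  rewrite runs_match_tuple; apply/forallP/eqP => [match_t | -> j]; last by rewrite tnth_mktuple.
  by apply: eq_from_tnth => j; apply: val_inj; rewrite tnth_mktuple /=; apply/esym/eqP/match_t.
have t0_comp : all (fun i : 'I_k.+1 => 0 < i) t0 && (\sum_(i <- t0) i == k).
  rewrite (match_span t0) ?match_t0 // span_k eqxx andbT.
  by apply/all_tnthP => j; rewrite tnth_mktuple runlen_gt0.
rewrite (bigD1 t0) // match_t0 eqxx big1 ?addr0 // => t /andP [_ t_neq].
by rewrite match_t0 (negbTE t_neq).
Qed.

End Compositions.

Definition compositions_sum (X : seq int) (k : nat) : int :=
  \sum_(2 <= r < k.+1)
     \sum_(t : r.-tuple 'I_k.+1 |
             all (fun i : 'I_k.+1 => (0 < i)%N) t && (\sum_(i <- t) (i : nat) == k)%N)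
        (-1) ^+ r * (Nrs X (map (fun i : 'I_k.+1 => (i : nat)) t))%:Z.

Lemma sum_signed_hits_Nrs X k : (0 < k)%N ->
  \sum_(0 <= u < size (run_starts X)) signed_hits X u k k.+1 =
  compositions_sum X k - (Nrs X [:: k])%:Z.
Proof.
move=> k_gt0; rewrite /signed_hits.
under eq_bigr do rewrite big_ltn // expr1 mulN1r runs_spanS runs_span0 addn0.
rewrite big_split sumrN /= addrC; congr (_ - _); last first.
  by rewrite Nrs_intE; apply: eq_bigr => u _; rewrite /runs_match /= addn0 andbT.
rewrite exchange_big; apply: eq_bigr => r _; rewrite -mulr_sumr.
under [RHS]eq_bigr do rewrite Nrs_intE mulr_sumr.
rewrite exchange_big /= mulr_sumr; apply: eq_big_nat => u /andP [_ u_lt].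
by rewrite -mulr_sumr sum_compositions_match //; apply: leq_ltn_trans u_lt.
Qed.

Lemma compositions_sum_Pauto X k : all pm1 X -> (0 < size X)%N -> (0 < k)%N ->
  4 * (compositions_sum X k - (Nrs X [:: k])%:Z) =
  2 * Pauto X k - Pauto X k.+1 - Pauto X k.-1.
Proof.
move=> X_pm1 X_gt0 k_gt0.
by rewrite -sum_signed_hits_Nrs // sum_signed_hits // sum_run_start_pairs.
Qed.

Theorem theorem7 (n q : nat) (c : int) (As : seq (seq int)) :
  (3 <= n)%N -> PComS n q c As ->
  [/\ 2 * (\sum_(A <- As) (nruns A)%:Z) = (n * q)%:Z - c,
      4 * (\sum_(A <- As) (Nrs A [:: 1%N])%:Z) = (n * q)%:Z - c &
      forall k : nat, (2 <= k <= n - 2)%N ->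
        \sum_(A <- As) (Nrs A [:: k])%:Z =
        \sum_(A <- As) \sum_(2 <= r < k.+1)
           \sum_(t : r.-tuple 'I_k.+1 |
                   all (fun i : 'I_k.+1 => (0 < i)%N) t &&
                   (\sum_(i <- t) (i : nat) == k)%N)
              (-1) ^+ r * (Nrs A (map (fun i : 'I_k.+1 => (i : nat)) t))%:Z].
Proof.
move=> n_ge3 [size_As As_pm1seq sum_Pauto].
have As_pm1 A : A \in As -> all pm1 A /\ size A = n.
  by move=> A_in; case/andP: (allP As_pm1seq A A_in) => /eqP.
have n_gt0 : (0 < n)%N by apply: leq_trans n_ge3.
have sum_n : \sum_(A <- As) n%:Z = (n * q)%:Z.
  by rewrite big_const_seq count_predT size_As iter_addr_0 -mulr_natr natz PoszM.
split.
- rewrite mulr_sumr (eq_big_seq (fun A => n%:Z - Pauto A 1)); last first.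
    by move=> A /As_pm1 [A_pm1 size_A]; rewrite -size_A nruns_Pauto1 // size_A.
  by rewrite sumrB sum_n sum_Pauto //; lia.
- rewrite mulr_sumr (eq_big_seq (fun A => n%:Z - 2 * Pauto A 1 + Pauto A 2)); last first.
    move=> A /As_pm1 [A_pm1 size_A].
    have A_gt0 : (0 < size A)%N by rewrite size_A.
    have := compositions_sum_Pauto A_pm1 A_gt0 (ltnSn 0).
    by rewrite /compositions_sum big_geq // Pauto0 // size_A; lia.
  by rewrite !big_split sumrN -mulr_sumr sum_n !sum_Pauto //=; lia.
move=> k k_in.
have sum_zero : \sum_(A <- As) 4 * (compositions_sum A k - (Nrs A [:: k])%:Z) = 0.
  rewrite (eq_big_seq (fun A => 2 * Pauto A k - Pauto A k.+1 - Pauto A k.-1)); last first.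
    by move=> A /As_pm1 [A_pm1 size_A]; rewrite compositions_sum_Pauto ?size_A //; lia.
  by rewrite !sumrB -mulr_sumr !sum_Pauto; lia.
change (\sum_(A <- As) (Nrs A [:: k])%:Z = \sum_(A <- As) compositions_sum A k).
by move: sum_zero; rewrite -mulr_sumr sumrB => /eqP; rewrite mulf_eq0 /= subr_eq0 => /eqP ->.
Qed.
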